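(* Let $S$ be a numerical semigroup with $m(S)=m$ and $g(S)=m+k_1$, where $m\ge 2k_1+2$, and let $(x_1,\ldots,x_{m-1})$ be the Kunz coordinate vector of $S$ with respect to $m$. Let $\overline{x}=(x_1,\ldots,x_{2k_1+1})$ and $g=g(S)$. Then \[e(S)=g-2k_1-1+a(\overline{x})+b(\overline{x})-c(\overline{x}).\]
   Context: A numerical semigroup $S$ is a submonoid of $\mathbb{N}_0$ with finite complement; $g(S)$ is the size of the complement, $m(S)$ the smallest nonzero element, and $e(S)$ the size of the minimal generating set $(S\setminus\{0\})\setminus((S\setminus\{0\})+(S\setminus\{0\}))$. For $m=m(S)$, the Apéry set $\{s\in S: s-m\notin S\}$ contains exactly one element $a_i$ in each residue class $i$ mod $m$; writing $a_i=k_im+i$ for $1\le i\le m-1$, the Kunz coordinate vector of $S$ with respect to $m$ is $(k_1,\ldots,k_{m-1})$ (each $k_i\ge1$). For a tuple $\overline{x}=(x_1,\ldots,x_t)$ of positive integers define $a(\overline{x})=\#\{i\in[1,t]: x_i=2\}$, $b(\overline{x})=\#\{i\in[1,t]: x_i=3\}$, and $c(\overline{x})=\#\{i\in[1,t]: \exists j_1,j_2\in[1,t] \text{ with } j_1+j_2=i,\ (x_{j_1},x_{j_2},x_i)=(1,1,2)\}$. *)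

From mathcomp Require Import all_boot all_algebra.
Set Implicit Arguments. Unset Strict Implicit. Unset Printing Implicit Defensive.

Definition numerical_semigroup (S : pred nat) : Prop :=
  S 0 /\ (forall a b, S a -> S b -> S (a + b)) /\
  exists N, forall n, N <= n -> S n.

Definition multiplicity_is (S : pred nat) (m : nat) : Prop :=
  0 < m /\ S m /\ forall n, 0 < n -> n < m -> ~~ S n.

Definition genus_is (S : pred nat) (g : nat) : Prop :=
  exists s : seq nat, uniq s /\ size s = g /\ forall n, (n \in s) = ~~ S n.

Definition min_generator (S : pred nat) (n : nat) : Prop :=
  S n /\ 0 < n /\
  ~ (exists a b, 0 < a /\ 0 < b /\ S a /\ S b /\ a + b = n).

Definition embdim_is (S : pred nat) (e : nat) : Prop :=
  exists s : seq nat, uniq s /\ size s = e /\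
    forall n, n \in s <-> min_generator S n.

(* x is the Kunz coordinate vector of S w.r.t. m (indices 1..m-1):
   a_i = x i * m + i is the Apery element in class i, i.e. a_i \in S and
   a_i - m \notin S (with x i >= 1). *)
Definition kunz_vector (S : pred nat) (m : nat) (x : nat -> nat) : Prop :=
  forall i, 1 <= i <= m - 1 ->
    0 < x i /\ S (x i * m + i) /\ ~~ S ((x i).-1 * m + i).

Definition cnt_a (t : nat) (x : nat -> nat) : nat :=
  count (fun i => x i == 2) (iota 1 t).
Definition cnt_b (t : nat) (x : nat -> nat) : nat :=
  count (fun i => x i == 3) (iota 1 t).
Definition cnt_c (t : nat) (x : nat -> nat) : nat :=
  count (fun i =>
    [&& x i == 2 &
        has (fun j1 => has (fun j2 =>
               [&& j1 + j2 == i, x j1 == 1 & x j2 == 1]) (iota 1 t)) (iota 1 t)])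
    (iota 1 t).

From mathcomp Require Import all_boot all_algebra zify.
Import GRing.Theory.
Set Implicit Arguments.
Unset Strict Implicit.

(* Write w_i = x_i m + i for the Apery elements.  The minimal generators are m
   and the w_i that are not a sum w_j + w_l, and the genus is the sum of the
   x_i, so g = m + k1 says that the excesses x_i - 1 add up to k1 + 1.  Hence
   few coordinates exceed 1, and a pigeonhole argument over the pairs
   (j, i - j) and (j, m + i - j) finds two coordinates equal to 1 whose Apery
   elements add up to w_i.  Together with the Kunz inequalities
   x_(j+l) <= x_j + x_l and x_(j+l-m) <= x_j + x_l + 1 this shows: x_i = 1 gives
   a generator; x_i = 2 gives a generator exactly when i <= 2 k1 + 1 and i is
   not a sum of two indices with coordinate 1; x_i >= 3 forces x_i = 3,
   i <= 2 k1 + 1 and w_i reducible. *)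

Lemma sum_count (T : Type) (p : pred T) (s : seq T) :
  \sum_(i <- s) (p i : nat) = count p s.
Proof. by elim: s => [|a s IH]; rewrite ?big_nil ?big_cons ?IH. Qed.

Lemma count_iota_prefix t n (p : pred nat) : t <= n ->
  count p (iota 1 t) = count (fun i => (i <= t) && p i) (iota 1 n).
Proof.
move=> le_tn; rewrite -(subnKC le_tn) iotaD count_cat.
have ->: count (fun i => (i <= t) && p i) (iota (1 + t) (n - t)) = 0.
  by apply/eqP; rewrite -leqn0 leqNgt -has_count; apply/hasPn => i; rewrite mem_iota /=; lia.
by rewrite addn0; apply: eq_in_count => i; rewrite mem_iota /= => range_i; have ->: i <= t by lia.
Qed.

Lemma exists_reflected_pair (P : pred nat) a b :
  2 * \sum_(a <= j < b) P j < b - a ->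
  exists2 j, a <= j < b & ~~ P j && ~~ P (a + b - j.+1).
Proof.
move=> sparse.
have [/hasP[j]|/hasPn none] :=
  boolP (has (fun j => ~~ P j && ~~ P (a + b - j.+1)) (index_iota a b)).
  by rewrite mem_index_iota; exists j.
suff: b - a <= 2 * \sum_(a <= j < b) P j by rewrite leqNgt sparse.
rewrite mul2n -addnn {2}big_nat_rev -big_split /=.
rewrite -[b - a](size_iota a) -sum1_size big_seq [X in _ <= X]big_seq.
apply: leq_sum => j /none.
by case: (P j); case: (P _).
Qed.

Lemma sum_subn1_nat a b (F : nat -> nat) : (forall i, a <= i < b -> 0 < F i) ->
  \sum_(a <= i < b) (F i - 1) + (b - a) = \sum_(a <= i < b) F i.
Proof.
move=> F_gt0; rewrite -[b - a](size_iota a) -sum1_size -big_split /=.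
by apply: eq_big_nat => i /F_gt0; lia.
Qed.

Definition apery (m : nat) (x : nat -> nat) i := x i * m + i.

Definition reducible m x i :=
  has (fun j => has (fun l => apery m x j + apery m x l == apery m x i)
    (iota 1 (m - 1))) (iota 1 (m - 1)).

Lemma reducibleP m x i :
  reflect (exists j l, [/\ 1 <= j <= m - 1, 1 <= l <= m - 1 &
                           apery m x j + apery m x l = apery m x i])
          (reducible m x i).
Proof.
apply: (iffP hasP) => [[j + /hasP[l + /eqP sum_jl]]|[j [l [range_j range_l sum_jl]]]].
  by rewrite !mem_iota => range_j range_l; exists j, l; split => //; lia.
by exists j; [|apply/hasP; exists l; [|apply/eqP]]; rewrite ?mem_iota //; lia.
Qed.

Definition is_c_index t (x : nat -> nat) i :=
  [&& x i == 2 &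
      has (fun j1 => has (fun j2 => [&& j1 + j2 == i, x j1 == 1 & x j2 == 1])
        (iota 1 t)) (iota 1 t)].

Lemma apery_gt0 m x i : 1 <= i <= m - 1 -> 0 < apery m x i.
Proof. by rewrite /apery; lia. Qed.

Lemma cnt_cE t x : cnt_c t x = count (is_c_index t x) (iota 1 t).
Proof. by []. Qed.

Section KunzCombinatorics.

Variables (m k1 : nat) (x : nat -> nat).
Hypothesis x_gt0 : forall i, 1 <= i <= m - 1 -> 0 < x i.
Hypothesis kunz_add : forall j l, 1 <= j -> 1 <= l -> j + l <= m - 1 ->
  x (j + l) <= x j + x l.
Hypothesis kunz_add_wrap : forall j l, 1 <= j <= m - 1 -> 1 <= l <= m - 1 ->
  m < j + l -> x (j + l - m) <= x j + x l + 1.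
Hypothesis sum_excess : \sum_(1 <= i < m) (x i - 1) = k1.+1.
Hypothesis m_large : 2 * k1 + 2 <= m.

Local Notation t := (2 * k1 + 1).
Local Notation reducible := (reducible m x).

Lemma excess_around i : 1 <= i <= m - 1 ->
  \sum_(1 <= j < i) (1 < x j) + \sum_(i.+1 <= j < m) (1 < x j) + (x i - 1) <= k1.+1.
Proof.
move=> range_i; rewrite -sum_excess [leqRHS](@big_cat_nat _ _ _ i) /=; try lia.
rewrite (@big_ltn _ _ _ i m) /=; last by lia.
have le_excess a b : \sum_(a <= j < b) (1 < x j) <= \sum_(a <= j < b) (x j - 1).
  by apply: leq_sum => j _; case: ltnP => /=; lia.
by have := le_excess 1 i; have := le_excess i.+1 m; lia.
Qed.

Lemma ones_below i : 1 <= i <= m - 1 -> 2 * \sum_(1 <= j < i) (1 < x j) < i - 1 ->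
  exists2 j, 1 <= j < i & x j = 1 /\ x (i - j) = 1.
Proof.
move=> range_i /exists_reflected_pair[j range_j /andP[]].
rewrite -!leqNgt (_ : 1 + i - j.+1 = i - j); last by lia.
by exists j => //; have := @x_gt0 j; have := @x_gt0 (i - j); lia.
Qed.

Lemma ones_above i : 1 <= i <= m - 1 -> 2 * \sum_(i.+1 <= j < m) (1 < x j) < m - i.+1 ->
  exists2 j, i < j < m & x j = 1 /\ x (m + i - j) = 1.
Proof.
move=> range_i /exists_reflected_pair[j range_j /andP[]].
rewrite -!leqNgt (_ : i.+1 + m - j.+1 = m + i - j); last by lia.
by exists j => //; have := @x_gt0 j; have := @x_gt0 (m + i - j); lia.
Qed.

Lemma x1_irreducible i : 1 <= i <= m - 1 -> x i = 1 -> ~~ reducible i.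
Proof.
move=> range_i x_i1; apply/reducibleP => -[j [l [range_j range_l]]].
by rewrite /apery x_i1; have := x_gt0 range_j; have := x_gt0 range_l; nia.
Qed.

Lemma x2_large_reducible i : 1 <= i <= m - 1 -> x i = 2 -> t < i -> reducible i.
Proof.
move=> range_i x_i2 lt_t_i; have excess := excess_around range_i.
have [|j range_j [x_j1 x_ij1]] := ones_below range_i; first lia.
by apply/reducibleP; exists j, (i - j); rewrite /apery x_j1 x_ij1 x_i2; split; lia.
Qed.

Lemma x_ge3_reducible i : 1 <= i <= m - 1 -> 3 <= x i ->
  [/\ x i = 3, reducible i & i <= t].
Proof.
move=> range_i x_i3; have excess := excess_around range_i.
have below : i - 1 <= 2 * \sum_(1 <= j < i) (1 < x j).
  rewrite leqNgt; apply/negP => /(ones_below range_i)[j range_j [x_j1 x_ij1]].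
  by have := @kunz_add j (i - j); rewrite subnKC; lia.
have [|j range_j [x_j1 x_mij1]] := ones_above range_i; first lia.
have := @kunz_add_wrap j (m + i - j); rewrite subnKC ?addKn; last by lia.
rewrite x_j1 x_mij1 => x_le3; have {}x_i3 : x i = 3 by lia.
split=> //; last by lia.
by apply/reducibleP; exists j, (m + i - j); rewrite /apery x_j1 x_mij1 x_i3; split; lia.
Qed.

Lemma x2_small_reducibleE i : 1 <= i <= m - 1 -> x i = 2 -> i <= t ->
  reducible i = is_c_index t x i.
Proof.
move=> range_i x_i2 le_i_t; rewrite /is_c_index x_i2 /=.
apply/reducibleP/hasP => [[j [l [range_j range_l]]]|[j + /hasP[l + /and3P[]]]].
  rewrite /apery x_i2 => sum_jl.
  have := x_gt0 range_j; have := x_gt0 range_l => x_l_gt0 x_j_gt0.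
  have x_j1 : x j = 1 by nia.
  have x_l1 : x l = 1 by nia.
  exists j; first by rewrite mem_iota; lia.
  by apply/hasP; exists l; rewrite ?mem_iota ?x_j1 ?x_l1 ?eqxx ?andbT; [lia|apply/eqP; lia].
rewrite !mem_iota => range_j range_l /eqP sum_jl /eqP x_j1 /eqP x_l1.
by exists j, l; rewrite /apery x_j1 x_l1 x_i2; split; lia.
Qed.

Lemma reducible_balance i : 1 <= i <= m - 1 ->
  (x i - 1) + ((i <= t) && is_c_index t x i) =
  reducible i + ((i <= t) && (x i == 2)) + ((i <= t) && (x i == 3)).
Proof.
move=> range_i; have := x_gt0 range_i.
case: (ltnP (x i) 3) => [lt_xi3 x_i_gt0|x_ge3 _]; last first.
  by have [x_i3 -> ->] := x_ge3_reducible range_i x_ge3; rewrite /is_c_index x_i3.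
have [x_i1|x_i2] : x i = 1 \/ x i = 2 by lia.
  by rewrite (negbTE (x1_irreducible range_i x_i1)) /is_c_index x_i1 /= !andbF.
have [le_i_t|lt_t_i] := leqP i t.
  by rewrite (x2_small_reducibleE range_i x_i2 le_i_t) x_i2 /= addn0 addnC.
by rewrite (x2_large_reducible range_i x_i2 lt_t_i) x_i2 /=.
Qed.

Lemma count_reducible :
  count reducible (iota 1 (m - 1)) + cnt_a t x + cnt_b t x = k1.+1 + cnt_c t x.
Proof.
have le_t_m : t <= m - 1 by lia.
rewrite /cnt_a /cnt_b cnt_cE !(count_iota_prefix _ le_t_m) -!sum_count.
rewrite -sum_excess -!big_split /=.
by apply: eq_big_seq => i; rewrite mem_iota => range_i; rewrite reducible_balance //; lia.
Qed.

End KunzCombinatorics.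

Section AperySet.

Variables (S : pred nat) (m : nat) (x : nat -> nat).
Hypothesis S_0 : S 0.
Hypothesis S_add : forall a b, S a -> S b -> S (a + b).
Hypothesis S_m : S m.
Hypothesis m_gt0 : 0 < m.
Hypothesis kunz : kunz_vector S m x.

Local Notation apery := (apery m x).

Lemma S_mulm c : S (c * m).
Proof. by elim: c => [|c IHc]; rewrite ?mulSn ?S_add. Qed.

Lemma mem_kunz i k : 1 <= i <= m - 1 -> S (k * m + i) = (x i <= k).
Proof.
move=> range_i; have [x_i_gt0 [S_apery notS_below]] := kunz range_i.
apply/idP/idP => [S_kmi|le_xi_k]; last first.
  have ->: k * m + i = x i * m + i + (k - x i) * m by rewrite -{1}(subnKC le_xi_k); lia.
  exact/S_add/S_mulm.
rewrite leqNgt; apply: contraNN notS_below => lt_k_xi.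
have ->: (x i).-1 * m + i = k * m + i + ((x i).-1 - k) * m.
  by rewrite -{1}(@subnKC k (x i).-1); lia.
exact/S_add/S_mulm.
Qed.

Lemma S_apery i : 1 <= i <= m - 1 -> S (apery i).
Proof. by move=> /kunz[_ []]. Qed.

Lemma apery_modn i : 1 <= i <= m - 1 -> apery i %% m = i.
Proof. by move=> range_i; rewrite modnMDl modn_small //; lia. Qed.

Lemma apery_le n : S n -> 0 < n %% m -> apery (n %% m) <= n.
Proof.
move=> Sn res_gt0; have := ltn_pmod n m_gt0 => res_lt.
have /mem_kunz: 1 <= n %% m <= m - 1 by lia.
move=> /(_ (n %/ m)); rewrite -divn_eq Sn => /esym le_x_q.
by rewrite /apery [leqRHS](divn_eq n m) leq_add2r leq_mul2r le_x_q orbT.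
Qed.

Lemma reducible_of_sum a b i : 1 <= i <= m - 1 -> S a -> S b -> 0 < a -> 0 < b ->
  a + b = apery i -> reducible m x i.
Proof.
move=> range_i Sa Sb a_gt0 b_gt0 sum_ab.
have res_ab : (a + b) %% m = i by rewrite sum_ab apery_modn.
have res_a_gt0 : 0 < a %% m.
  rewrite lt0n; apply/negP => /eqP res_a0.
  have res_b : b %% m = i by rewrite -res_ab -modnDml res_a0.
  by have := apery_le Sb; rewrite res_b; lia.
have res_b_gt0 : 0 < b %% m.
  rewrite lt0n; apply/negP => /eqP res_b0.
  have res_a : a %% m = i by rewrite -res_ab -modnDmr res_b0 addn0.
  by have := apery_le Sa; rewrite res_a; lia.
have := ltn_pmod a m_gt0; have := ltn_pmod b m_gt0 => res_b_lt res_a_lt.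
have range_a : 1 <= a %% m <= m - 1 by lia.
have range_b : 1 <= b %% m <= m - 1 by lia.
have S_sum : S (apery (a %% m) + apery (b %% m)) by apply: S_add; apply: S_apery.
have res_sum : (apery (a %% m) + apery (b %% m)) %% m = i.
  by rewrite -modnDm !apery_modn // modnDm.
have := apery_le S_sum; have := apery_le Sa; have := apery_le Sb; rewrite res_sum.
by move=> le_b le_a le_sum; apply/reducibleP; exists (a %% m), (b %% m); split=> //; lia.
Qed.

Lemma kunz_add j l : 1 <= j -> 1 <= l -> j + l <= m - 1 -> x (j + l) <= x j + x l.
Proof.
move=> j_ge1 l_ge1 le_jl; rewrite -mem_kunz; last by lia.
have ->: (x j + x l) * m + (j + l) = apery j + apery l by rewrite /apery; lia.
by apply: S_add; apply: S_apery; lia.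
Qed.

Lemma kunz_add_wrap j l : 1 <= j <= m - 1 -> 1 <= l <= m - 1 -> m < j + l ->
  x (j + l - m) <= x j + x l + 1.
Proof.
move=> range_j range_l lt_m_jl; rewrite -mem_kunz; last by lia.
have ->: (x j + x l + 1) * m + (j + l - m) = apery j + apery l by rewrite /apery; lia.
by apply: S_add; apply: S_apery.
Qed.

Lemma min_generator_apery i : 1 <= i <= m - 1 ->
  min_generator S (apery i) <-> ~~ reducible m x i.
Proof.
move=> range_i; split=> [[_ [_ irreducible]]|irreducible].
  apply/reducibleP => -[j [l [range_j range_l sum_jl]]]; apply: irreducible.
  by exists (apery j), (apery l); rewrite !apery_gt0 ?S_apery.
split; [exact: S_apery|split; first exact: apery_gt0].
by move=> [a [b [a_gt0 [b_gt0 [Sa [Sb sum_ab]]]]]]; case/negP: irreducible;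
  apply: reducible_of_sum sum_ab.
Qed.

Hypothesis m_min : forall n, 0 < n -> n < m -> ~~ S n.

Lemma min_generator_m : min_generator S m.
Proof.
split=> //; split=> // -[a [b [a_gt0 [b_gt0 [Sa [Sb sum_ab]]]]]].
by have := contraTN (m_min a_gt0) Sa; rewrite -leqNgt; lia.
Qed.

Lemma min_generator_cases n : min_generator S n ->
  n = m \/ exists2 i, 1 <= i <= m - 1 & n = apery i.
Proof.
move=> [Sn [n_gt0 irreducible]]; have := ltn_pmod n m_gt0.
set q := n %/ m; set r := n %% m => lt_r_m; have n_eq : n = q * m + r := divn_eq n m.
have [r0|r_gt0] := posnP r.
  left; have q1 : q = 1.
    apply/eqP; rewrite eqn_leq; apply/andP; split; last by nia.
    rewrite leqNgt; apply/negP => q_gt1; apply: irreducible.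
    by exists m, ((q - 1) * m); rewrite S_mulm; do !split => //; nia.
  by rewrite n_eq q1 r0 mul1n addn0.
have range_r : 1 <= r <= m - 1 by lia.
have le_x_q : x r <= q by rewrite -mem_kunz // -n_eq.
right; exists r => //; apply/eqP; rewrite eqn_leq apery_le //= leqNgt.
apply/negP => lt_apery_n; apply: irreducible.
exists (apery r), ((q - x r) * m); rewrite apery_gt0 ?S_apery ?S_mulm //.
by do !split => //; rewrite /apery in lt_apery_n *; nia.
Qed.

Definition min_generators :=
  m :: [seq apery i | i <- iota 1 (m - 1) & ~~ reducible m x i].

Lemma mem_min_generators n : min_generator S n <-> n \in min_generators.
Proof.
rewrite inE; split=> [gen|/orP[/eqP->|]]; last 2 first.
- exact: min_generator_m.
- case/mapP=> i; rewrite mem_filter mem_iota => /andP[irreducible range_i] ->.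
  by apply/min_generator_apery; rewrite ?irreducible; lia.
case: (min_generator_cases gen) => [->|[i range_i n_eq]]; first by rewrite eqxx.
rewrite n_eq in gen *; apply/orP; right; apply: map_f.
by rewrite mem_filter mem_iota; apply/andP; split; [exact/min_generator_apery|lia].
Qed.

Lemma uniq_min_generators : uniq min_generators.
Proof.
rewrite /= map_inj_in_uniq ?filter_uniq ?iota_uniq ?andbT //.
  apply/mapP => -[i]; rewrite mem_filter mem_iota => /andP[_ range_i] m_eq.
  by have := apery_modn range_i; rewrite -m_eq modnn; lia.
move=> i j; rewrite !mem_filter !mem_iota => /andP[_ range_i] /andP[_ range_j] eq_ij.
by rewrite -(apery_modn range_i) eq_ij apery_modn.
Qed.

Lemma embdim_kunz e : embdim_is S e ->
  e = 1 + count (predC (reducible m x)) (iota 1 (m - 1)).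
Proof.
move=> [s [uniq_s [<- mem_s]]].
have: perm_eq s min_generators.
  apply: uniq_perm uniq_s uniq_min_generators _ => n; apply/idP/idP => [/mem_s|].
    by rewrite -mem_min_generators.
  by rewrite -mem_min_generators => /mem_s.
by move/perm_size ->; rewrite /= size_map size_filter.
Qed.

Lemma count_gaps M : count (predC S) (iota 0 (M * m)) = \sum_(1 <= i < m) minn (x i) M.
Proof.
elim: M => [|M IHM]; first by rewrite big1 // => i _; rewrite minn0.
rewrite mulSnr iotaD count_cat IHM add0n.
have ->: \sum_(1 <= i < m) minn (x i) M.+1 =
         \sum_(1 <= i < m) (minn (x i) M + (M < x i)).
  by apply: eq_bigr => i _; case: ltnP => /=; lia.
rewrite big_split /=; congr (_ + _).
have iota_m : iota 0 m = 0 :: iota 1 (m - 1) by case: (m) m_gt0 => //= n _; rewrite subn1.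
rewrite -[M * m]addn0 iotaDl count_map iota_m /= addn0 S_mulm /= -sum_count.
by apply: eq_big_seq => i; rewrite mem_iota => range_i /=; rewrite mem_kunz ?ltnNge //; lia.
Qed.

Lemma genus_kunz N g : (forall n, N <= n -> S n) -> genus_is S g ->
  g = \sum_(1 <= i < m) x i.
Proof.
move=> conductor [s [uniq_s [<- mem_s]]].
have: perm_eq s [seq n <- iota 0 (N * m) | ~~ S n].
  apply: uniq_perm uniq_s (filter_uniq _ (iota_uniq _ _)) _ => n.
  rewrite mem_filter mem_iota mem_s /=; case Sn: (S n) => //=; apply/esym.
  have := leq_pmulr N m_gt0; case: (leqP N n) => [/conductor|]; rewrite ?Sn //; lia.
move/perm_size ->; rewrite size_filter count_gaps.
apply: eq_big_nat => i range_i; apply/minn_idPl.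
have /kunz[x_i_gt0 [_ notS_below]] : 1 <= i <= m - 1 by lia.
have: (x i).-1 * m + i < N by rewrite ltnNge; apply: contraNN notS_below; exact: conductor.
by have := leq_pmulr (x i).-1 m_gt0; lia.
Qed.

End AperySet.

Local Open Scope ring_scope.

Theorem proposition8p6 (S : pred nat) (m k1 g e : nat) (x : nat -> nat) :
  numerical_semigroup S ->
  multiplicity_is S m ->
  genus_is S g ->
  g = (m + k1)%N ->
  (2 * k1 + 2 <= m)%N ->
  kunz_vector S m x ->
  embdim_is S e ->
  (e%:Z = g%:Z - (2 * k1)%:Z - 1
          + (cnt_a (2 * k1 + 1) x)%:Z + (cnt_b (2 * k1 + 1) x)%:Z
          - (cnt_c (2 * k1 + 1) x)%:Z).
Proof.
move=> [S_0 [S_add [N conductor]]] [m_gt0 [S_m m_min]] genus g_eq m_large kunz embdim.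
have x_gt0 i : (1 <= i <= m - 1)%N -> (0 < x i)%N by case/kunz.
have excess : (\sum_(1 <= i < m) (x i - 1) = k1.+1)%N.
  have /sum_subn1_nat : forall i, (1 <= i < m)%N -> (0 < x i)%N.
    by move=> i range_i; apply: x_gt0; lia.
  by rewrite -(genus_kunz S_0 S_add S_m m_gt0 kunz conductor genus); lia.
have := count_reducible x_gt0 (kunz_add S_0 S_add S_m m_gt0 kunz)
  (kunz_add_wrap S_0 S_add S_m m_gt0 kunz) excess m_large.
rewrite (embdim_kunz S_0 S_add S_m m_gt0 kunz m_min embdim).
have := count_predC (reducible m x) (iota 1 (m - 1)); rewrite size_iota.
lia.
Qed.
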